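(* Under the setting of the FPI method below (with $\phi,\psi$ Lipschitz with constants $L_1,L_2$, $A+\Omega B=M-N$, $M$ nonsingular, and a solution $x^*$ of the VNCP), let $\alpha=\|M^{-1}\|$, $\beta=\|N\|+L_1+L_2\|\Omega\|$, $\gamma=\|A-\Omega B\|+L_1+L_2\|\Omega\|$, $y^*=|(A-\Omega B)x^*+\phi(x^* )-\Omega\psi(x^* )|$, and $$E_\gamma^{(k)}=\begin{bmatrix}\gamma\|x^k-x^*\|\\ \|y^k-y^*\|\end{bmatrix},\qquad T_\gamma=\begin{bmatrix}\alpha\beta & \alpha\gamma\\ \tau\alpha\beta & \tau\alpha\gamma+|1-\tau|\end{bmatrix}.$$ Then for all $k\ge0$, $\|E_\gamma^{(k+1)}\|_\infty\le\|T_\gamma\|_\infty\|E_\gamma^{(k)}\|_\infty$. Moreover, for $\tau>0$, $\|T_\gamma\|_\infty<1$ if and only if $$\alpha(\beta+\gamma)<1\quad\text{and}\quad 0<\tau<\frac{2}{\alpha(\beta+\gamma)+1}.$$ Consequently, if these conditions hold, the sequence $\{x^k\}$ generated by the FPI method converges to $x^*$ (and $x^*$ is the unique solution of the VNCP).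
   Context: The VNCP is: find $x\in\mathbb{R}^n$ with $Ax+\phi(x)\ge0$, $Bx+\psi(x)\ge0$, $(Ax+\phi(x))^T(Bx+\psi(x))=0$, where $A,B\in\mathbb{R}^{n\times n}$ and $\phi,\psi:\mathbb{R}^n\to\mathbb{R}^n$ act componentwise. $\Omega$ is a positive diagonal matrix; $\|\phi(u)-\phi(v)\|\le L_1\|u-v\|$, $\|\psi(u)-\psi(v)\|\le L_2\|u-v\|$ for all $u,v$. The FPI method with splitting $A+\Omega B=M-N$ ($M$ nonsingular) and parameter $\tau>0$ generates from any $(x^0,y^0)$: $x^{k+1}=M^{-1}[Nx^k+y^k-\phi(x^k)-\Omega\psi(x^k)]$, $y^{k+1}=(1-\tau)y^k+\tau|(A-\Omega B)x^{k+1}+\phi(x^{k+1})-\Omega\psi(x^{k+1})|$, with $|\cdot|$ componentwise absolute value. $\|\cdot\|$ is the Euclidean norm / spectral norm, and $\|\cdot\|_\infty$ is the max-norm on $\mathbb{R}^2$ and the induced (max row sum) matrix norm. *)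

From HB Require Import structures.
From mathcomp Require Import all_boot all_order all_algebra.
From mathcomp Require Import all_classical all_reals all_analysis.
Set Implicit Arguments. Unset Strict Implicit. Unset Printing Implicit Defensive.
Import Order.TTheory GRing.Theory Num.Theory.
Import numFieldNormedType.Exports.
Local Open Scope classical_set_scope.
Local Open Scope ring_scope.

Section Defs.
Variable R : realType.

Definition enorm n (x : 'cV[R]_n) : R := Num.sqrt (\sum_i (x i 0) ^+ 2).

Definition specnorm n (A : 'M[R]_n) : R :=
  sup [set enorm (A *m x) | x in [set x : 'cV[R]_n | enorm x <= 1]].

Definition absv n (x : 'cV[R]_n) : 'cV[R]_n := map_mx (fun a => `|a|) x.

Definition nonneg_vec n (x : 'cV[R]_n) : Prop := forall i, 0 <= x i 0.

Definition componentwise n (f : 'cV[R]_n -> 'cV[R]_n) : Prop :=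
  exists g : 'I_n -> R -> R, forall x i, f x i 0 = g i (x i 0).

Definition pos_diag n (W : 'M[R]_n) : Prop :=
  is_diag_mx W /\ forall i, 0 < W i i.

Definition vncp_sol n (A B : 'M[R]_n) (phi psi : 'cV[R]_n -> 'cV[R]_n)
    (x : 'cV[R]_n) : Prop :=
  nonneg_vec (A *m x + phi x) /\ nonneg_vec (B *m x + psi x) /\
  \sum_i ((A *m x + phi x) i 0 * (B *m x + psi x) i 0) = 0.

Definition fpi_seq n (A B Omega M N : 'M[R]_n) (phi psi : 'cV[R]_n -> 'cV[R]_n)
    (tau : R) (x y : nat -> 'cV[R]_n) : Prop :=
  forall k,
    x k.+1 = invmx M *m (N *m x k + y k - phi (x k) - Omega *m psi (x k)) /\
    y k.+1 = (1 - tau) *: y k +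
             tau *: absv ((A - Omega *m B) *m x k.+1 + phi (x k.+1)
                          - Omega *m psi (x k.+1)).

Definition mx22 (a b c d : R) : 'M[R]_2 :=
  \matrix_(i < 2, j < 2)
    if i == 0 :> nat then (if j == 0 :> nat then a else b)
    else (if j == 0 :> nat then c else d).

Definition v2 (a b : R) : 'cV[R]_2 :=
  \col_(i < 2) if i == 0 :> nat then a else b.

Definition infnorm_v m (v : 'cV[R]_m) : R := \big[Num.max/0]_i `|v i 0|.
Definition infnorm_m m (T : 'M[R]_m) : R :=
  \big[Num.max/0]_i \sum_j `|T i j|.

End Defs.

From HB Require Import structures.
From mathcomp Require Import all_boot all_order all_algebra.
From mathcomp Require Import all_classical all_reals all_analysis.
From mathcomp Require Import ring lra.
Import Order.TTheory GRing.Theory Num.Theory.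
Import numFieldNormedType.Exports.
Set Implicit Arguments. Unset Strict Implicit. Unset Printing Implicit Defensive.
Local Open Scope classical_set_scope.
Local Open Scope ring_scope.

(* Write e_k = |x_k - xstar| and f_k = |y_k - ystar|.  Complementarity turns
   |(A - Omega B) xstar + phi xstar - Omega psi xstar| into
   (A xstar + phi xstar) + Omega (B xstar + psi xstar), so xstar is a fixed point of the
   x-update with y = ystar, and the Lipschitz bounds give
   e_{k+1} <= alpha (beta e_k + f_k) and f_{k+1} <= |1 - tau| f_k + tau gamma e_{k+1}.
   Substituting the first bound into the second bounds max (gamma e_{k+1}, f_{k+1}) by the
   max row sum of T_gamma times max (gamma e_k, f_k); whether that row sum is below 1 is a
   case distinction on tau <= 1.  For convergence, gamma is raised to a weight delta with
   alpha (beta + delta) < 1: then max (delta e_k, f_k) still decays geometrically and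
   controls e_k even when gamma = 0.  Uniqueness: for any solution z the same bounds give
   |z - xstar| <= alpha (beta + gamma) |z - xstar|. *)

Section EuclideanNorm.
Variables (R : realType) (n : nat).
Implicit Types (u v : 'cV[R]_n) (a : R).

Lemma enorm_ge0 v : 0 <= enorm v.
Proof. exact: sqrtr_ge0. Qed.

Lemma enorm_sqr v : enorm v ^+ 2 = \sum_i v i 0 ^+ 2.
Proof. by rewrite sqr_sqrtr // sumr_ge0 // => i _; rewrite sqr_ge0. Qed.

Lemma enormZ a v : enorm (a *: v) = `|a| * enorm v.
Proof.
rewrite /enorm (eq_bigr (fun i => a ^+ 2 * v i 0 ^+ 2)) => [|i _]; last first.
  by rewrite mxE exprMn.
by rewrite -mulr_sumr sqrtrM ?sqr_ge0 // sqrtr_sqr.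
Qed.

Lemma enormN v : enorm (- v) = enorm v.
Proof. by rewrite -scaleN1r enormZ normrN1 mul1r. Qed.

Lemma enorm0 : enorm (0 : 'cV[R]_n) = 0.
Proof. by rewrite -(scale0r 0) enormZ normr0 mul0r. Qed.

Lemma enorm_eq0 v : enorm v = 0 -> v = 0.
Proof.
move=> /(congr1 (fun r => r ^+ 2)); rewrite enorm_sqr expr0n /= => v0.
apply/matrixP => i j; rewrite (ord1 j) mxE.
have /eqP := psumr_eq0P (fun i _ => sqr_ge0 (v i 0)) v0 (i := i) isT.
by rewrite sqrf_eq0 => /eqP.
Qed.

Lemma enorm_dim0 v : n = 0 -> enorm v = 0.
Proof.
by move=> n0; rewrite /enorm big1 ?sqrtr0 // => -[i i_lt]; exfalso; rewrite n0 in i_lt.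
Qed.

Lemma normr_coord_le_enorm v i : `|v i 0| <= enorm v.
Proof.
rewrite -sqrtr_sqr ler_wsqrtr // (bigD1 i) //= lerDl.
by apply: sumr_ge0 => j _; exact: sqr_ge0.
Qed.

Lemma mx_norm_le_enorm v : `|v| <= enorm v.
Proof.
rewrite -[`|v|]/(mx_norm v) mx_normrE.
apply: bigmax_le => [|[i j] _]; first exact: enorm_ge0.
by rewrite /= (ord1 j); exact: normr_coord_le_enorm.
Qed.

Lemma enorm_le_sum_normr v : enorm v <= \sum_i `|v i 0|.
Proof.
rewrite -[X in _ <= X]ger0_norm ?sumr_ge0 // -sqrtr_sqr ler_wsqrtr //.
rewrite expr2 mulr_sumr; apply: ler_sum => i _.
rewrite -[v i 0 ^+ 2]ger0_norm ?sqr_ge0 // normrX expr2.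
by rewrite ler_wpM2r // (bigD1 i) //= lerDl sumr_ge0.
Qed.

(* From [2 (b u_i) (a v_i) <= (b u_i)^2 + (a v_i)^2] with [a = |u|], [b = |v|]. *)
Lemma sum_mul_le_enorm u v : \sum_i u i 0 * v i 0 <= enorm u * enorm v.
Proof.
set a := enorm u; set b := enorm v; set S := \sum_i _.
have [a0|a_neq0] := eqVneq a 0.
  by rewrite /S (enorm_eq0 a0) a0 mul0r big1 // => i _; rewrite mxE mul0r.
have [b0|b_neq0] := eqVneq b 0.
  by rewrite /S (enorm_eq0 b0) b0 mulr0 big1 // => i _; rewrite mxE mulr0.
have ab_gt0 : 0 < a * b by rewrite mulr_gt0 // lt0r ?a_neq0 ?b_neq0 ?enorm_ge0.
have amgm : 2 * (a * b) * S <= 2 * (a * b) * (a * b).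
  have -> : 2 * (a * b) * (a * b) = \sum_i ((b * u i 0) ^+ 2 + (a * v i 0) ^+ 2).
    under eq_bigr do rewrite !exprMn.
    rewrite big_split /= -!mulr_sumr -!enorm_sqr -/a -/b; ring.
  rewrite /S !mulr_sumr; apply: ler_sum => i _.
  have := sqr_ge0 (b * u i 0 - a * v i 0); lra.
by rewrite -(ler_pM2l ab_gt0); lra.
Qed.

Lemma enormD u v : enorm (u + v) <= enorm u + enorm v.
Proof.
rewrite -[X in _ <= X]ger0_norm ?addr_ge0 ?enorm_ge0 // -sqrtr_sqr ler_wsqrtr //.
have -> : \sum_i (u + v) i 0 ^+ 2 =
    enorm u ^+ 2 + enorm v ^+ 2 + 2 * \sum_i u i 0 * v i 0.
  rewrite !enorm_sqr mulr_sumr -!big_split /=.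
  by apply: eq_bigr => i _; rewrite !mxE; ring.
have := sum_mul_le_enorm u v; rewrite sqrrD; lra.
Qed.

Lemma enormB u v : enorm (u - v) <= enorm u + enorm v.
Proof. by rewrite -(enormN v); exact: enormD. Qed.

Lemma enorm_absvB u v : enorm (absv u - absv v) <= enorm (u - v).
Proof.
apply: ler_wsqrtr; apply: ler_sum => i _; rewrite !mxE.
rewrite -real_normK ?num_real // -[X in _ <= X]real_normK ?num_real //.
by rewrite ler_pXn2r ?nnegrE // ler_dist_dist.
Qed.

Lemma cvg_of_enorm_cvg0 (x : nat -> 'cV[R]_n) (a : 'cV[R]_n) :
  (fun k => enorm (x k - a)) @ \oo --> 0 -> x @ \oo --> a.
Proof.
move=> e_cvg0; apply/subr_cvg0/(norm_cvg0 (F := \oo)).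
apply: (squeeze_cvgr _ (cvg_cst 0) e_cvg0).
by near=> k; rewrite normr_ge0 mx_norm_le_enorm.
Unshelve. all: by end_near.
Qed.

End EuclideanNorm.

Section SpectralNorm.
Variables (R : realType) (n : nat).
Implicit Types (P : 'M[R]_n) (v : 'cV[R]_n).

Lemma specnorm_has_sup P :
  has_sup [set enorm (P *m v) | v in [set v : 'cV[R]_n | enorm v <= 1]].
Proof.
split; first by exists 0, 0; rewrite /= ?mulmx0 enorm0.
exists (\sum_i \sum_j `|P i j|) => _ [v /= v_le1 <-].
apply: (le_trans (enorm_le_sum_normr _)); apply: ler_sum => i _.
rewrite mxE; apply: (le_trans (ler_norm_sum _ _ _)); apply: ler_sum => j _.
rewrite normrM ler_piMr //; exact: le_trans (normr_coord_le_enorm v j) v_le1.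
Qed.

Lemma specnorm_ge0 P : 0 <= specnorm P.
Proof.
apply: (sup_upper_bound (specnorm_has_sup P)).
by exists 0; rewrite /= ?mulmx0 enorm0.
Qed.

Lemma enorm_mulmx_le P v : enorm (P *m v) <= specnorm P * enorm v.
Proof.
have [v0|v_neq0] := eqVneq (enorm v) 0.
  by rewrite (enorm_eq0 v0) mulmx0 enorm0 mulr0.
have v_gt0 : 0 < enorm v by rewrite lt0r v_neq0 enorm_ge0.
have w_in : [set enorm (P *m u) | u in [set u | enorm u <= 1]]
    (enorm (P *m ((enorm v)^-1 *: v))).
  by exists ((enorm v)^-1 *: v); rewrite //= enormZ ger0_norm ?invr_ge0 ?enorm_ge0 // mulVf.
have := sup_upper_bound (specnorm_has_sup P) w_in.
rewrite -scalemxAr enormZ ger0_norm ?invr_ge0 ?enorm_ge0 //.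
by rewrite ler_pdivrMl // mulrC.
Qed.

Lemma specnorm_dim0 P : n = 0 -> specnorm P = 0.
Proof.
move=> n0; apply/eqP; rewrite eq_le specnorm_ge0 andbT.
apply: ge_sup; first exact: (specnorm_has_sup P).1.
by move=> _ [v _ <-]; rewrite enorm_dim0.
Qed.

End SpectralNorm.

Section Lipschitz.
Variables (R : realType) (n : nat).
Implicit Types (f : 'cV[R]_n -> 'cV[R]_n) (L : R).

Definition enorm_lipschitz f L := forall u v, enorm (f u - f v) <= L * enorm (u - v).

Lemma enorm_lipschitz_ge0 f L : (0 < n)%N -> enorm_lipschitz f L -> 0 <= L.
Proof.
move=> n_gt0 f_lip; set one : 'cV[R]_n := const_mx 1.
have one_gt0 : 0 < enorm (0 - one).
  rewrite lt0r enorm_ge0 andbT; apply/eqP => /enorm_eq0/matrixP.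
  by move=> /(_ (Ordinal n_gt0) 0); rewrite !mxE; lra.
have := f_lip 0 one; have := enorm_ge0 (f 0 - f one); nra.
Qed.

Lemma enorm_mulmx_lipschitzB (P : 'M[R]_n) f L u v : enorm_lipschitz f L ->
  enorm (P *m (f u - f v)) <= specnorm P * L * enorm (u - v).
Proof.
move=> f_lip; apply: (le_trans (enorm_mulmx_le _ _)).
by rewrite -mulrA ler_wpM2l ?specnorm_ge0.
Qed.

Lemma lipschitz_gain_ge0 (Q S : 'M[R]_n) f g L1 L2 : (0 < n)%N ->
  enorm_lipschitz f L1 -> enorm_lipschitz g L2 ->
  0 <= specnorm Q + L1 + L2 * specnorm S.
Proof.
move=> n_gt0 /(enorm_lipschitz_ge0 n_gt0) L1_ge0 /(enorm_lipschitz_ge0 n_gt0) L2_ge0.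
by rewrite !addr_ge0 ?specnorm_ge0 // mulr_ge0 ?specnorm_ge0.
Qed.

(* In dimension 0 the Lipschitz constants may be negative, but then [specnorm P = 0]. *)
Lemma specnorm_mul_lipschitz_gain_ge0 (P Q S : 'M[R]_n) f g L1 L2 :
  enorm_lipschitz f L1 -> enorm_lipschitz g L2 ->
  0 <= specnorm P * (specnorm Q + L1 + L2 * specnorm S).
Proof.
have [n0 _ _|n_gt0 f_lip g_lip] := posnP n; first by rewrite specnorm_dim0 ?mul0r.
by rewrite mulr_ge0 ?specnorm_ge0 ?(lipschitz_gain_ge0 _ _ n_gt0 f_lip g_lip).
Qed.

End Lipschitz.

Section Complementarity.
Variables (R : realType) (n : nat) (W : 'M[R]_n).
Hypothesis W_diag : is_diag_mx W.

Lemma diag_mulmx_col (v : 'cV[R]_n) : W *m v = \col_i (W i i * v i 0).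
Proof.
move/is_diag_mxP : W_diag => W0; apply/matrixP => i j; rewrite (ord1 j) !mxE.
by rewrite (bigD1 i) //= big1 ?addr0 // => k ki; rewrite W0 ?mul0r // eq_sym.
Qed.

(* Complementarity [u_i v_i = 0] with [u, v >= 0] makes [u_i - W_ii v_i] sign-definite. *)
Lemma absv_sub_diag_compl (u v : 'cV[R]_n) :
  (forall i, 0 <= W i i) -> nonneg_vec u -> nonneg_vec v ->
  \sum_i u i 0 * v i 0 = 0 -> absv (u - W *m v) = u + W *m v.
Proof.
move=> W_ge0 u_ge0 v_ge0 uv0; apply/matrixP => i j.
rewrite diag_mulmx_col (ord1 j) !mxE.
have /eqP := psumr_eq0P (fun i _ => mulr_ge0 (u_ge0 i) (v_ge0 i)) uv0 (i := i) isT.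
rewrite mulf_eq0 => /orP[] /eqP ->.
  by rewrite sub0r add0r normrN ger0_norm // mulr_ge0.
by rewrite mulr0 subr0 addr0 ger0_norm.
Qed.

End Complementarity.

Section FixedPointIteration.
Variables (R : realType) (n : nat) (A B Omega M N : 'M[R]_n).
Variables (phi psi : 'cV[R]_n -> 'cV[R]_n) (L1 L2 : R).
Implicit Types (u v w z : 'cV[R]_n).

Definition vncp_w z := (A - Omega *m B) *m z + phi z - Omega *m psi z.

Definition fpi_step u w := invmx M *m (N *m u + w - phi u - Omega *m psi u).

Lemma vncp_sol_fixed z : pos_diag Omega -> A + Omega *m B = M - N ->
  M \in unitmx -> vncp_sol A B phi psi z -> fpi_step z (absv (vncp_w z)) = z.
Proof.
move=> [diagOmega posOmega] splitting unitM [u_ge0 [v_ge0 uv0]].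
have -> : vncp_w z = (A *m z + phi z) - Omega *m (B *m z + psi z).
  by rewrite /vncp_w mulmxDr mulmxBl mulmxA; apply/matrixP => i j; rewrite !mxE; ring.
have nnegOmega i : 0 <= Omega i i by exact: ltW.
rewrite /fpi_step absv_sub_diag_compl //.
have -> : N *m z + (A *m z + phi z + Omega *m (B *m z + psi z)) - phi z
          - Omega *m psi z = (A + Omega *m B + N) *m z.
  rewrite mulmxDr !mulmxDl mulmxA; apply/matrixP => i j; rewrite !mxE; ring.
by rewrite splitting subrK mulKmx.
Qed.

Local Notation beta := (specnorm N + L1 + L2 * specnorm Omega).
Local Notation gamma := (specnorm (A - Omega *m B) + L1 + L2 * specnorm Omega).

Hypotheses (phi_lip : enorm_lipschitz phi L1) (psi_lip : enorm_lipschitz psi L2).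

Lemma enorm_lipschitz_sumB (P : 'M[R]_n) d u v : enorm d <= L1 * enorm (u - v) ->
  enorm (P *m (u - v) + d - Omega *m (psi u - psi v))
  <= (specnorm P + L1 + L2 * specnorm Omega) * enorm (u - v).
Proof.
move=> d_le; apply: (le_trans (enormB _ _)).
apply: (le_trans (lerD (enormD _ _) (lexx _))).
have := enorm_mulmx_le P (u - v); have := enorm_mulmx_lipschitzB Omega u v psi_lip.
lra.
Qed.

Lemma enorm_vncp_wB u v : enorm (vncp_w u - vncp_w v) <= gamma * enorm (u - v).
Proof.
have -> : vncp_w u - vncp_w v = (A - Omega *m B) *m (u - v) + (phi u - phi v)
                                - Omega *m (psi u - psi v).
  by rewrite /vncp_w !mulmxBr; apply/matrixP => i j; rewrite !mxE; ring.
exact: enorm_lipschitz_sumB.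
Qed.

Lemma enorm_fpi_stepB u w u' w' : enorm (fpi_step u w - fpi_step u' w')
  <= specnorm (invmx M) * (beta * enorm (u - u') + enorm (w - w')).
Proof.
rewrite -mulmxBr; apply: (le_trans (enorm_mulmx_le _ _)).
rewrite ler_wpM2l ?specnorm_ge0 //.
have -> : N *m u + w - phi u - Omega *m psi u - (N *m u' + w' - phi u' - Omega *m psi u')
    = (N *m (u - u') - (phi u - phi u') - Omega *m (psi u - psi u')) + (w - w').
  by rewrite !mulmxBr; apply/matrixP => i j; rewrite !mxE; ring.
apply: (le_trans (enormD _ _)); rewrite lerD2r.
by apply: enorm_lipschitz_sumB; rewrite enormN.
Qed.

Lemma enorm_relaxB tau w u u' : 0 <= tau ->
  enorm ((1 - tau) *: w + tau *: absv (vncp_w u) - absv (vncp_w u'))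
  <= `|1 - tau| * enorm (w - absv (vncp_w u')) + tau * (gamma * enorm (u - u')).
Proof.
move=> tau_ge0.
have -> : (1 - tau) *: w + tau *: absv (vncp_w u) - absv (vncp_w u') =
    (1 - tau) *: (w - absv (vncp_w u')) + tau *: (absv (vncp_w u) - absv (vncp_w u')).
  by apply/matrixP => i j; rewrite !mxE; ring.
apply: (le_trans (enormD _ _)); rewrite !enormZ (ger0_norm tau_ge0) lerD2l.
by rewrite ler_wpM2l // (le_trans (enorm_absvB _ _)) ?enorm_vncp_wB.
Qed.

(* The two bounds combine to [|z - z'| <= alpha (beta + gamma) |z - z'|]. *)
Lemma fpi_fixed_unique z z' :
  specnorm (invmx M) * (beta + gamma) < 1 ->
  fpi_step z (absv (vncp_w z)) = z -> fpi_step z' (absv (vncp_w z')) = z' -> z = z'.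
Proof.
move=> contr z_fix z'_fix; apply/eqP; rewrite -subr_eq0; apply/eqP/enorm_eq0.
have := enorm_fpi_stepB z (absv (vncp_w z)) z' (absv (vncp_w z')).
rewrite z_fix z'_fix.
have := le_trans (enorm_absvB (vncp_w z) (vncp_w z')) (enorm_vncp_wB z z').
set a := specnorm (invmx M); set e := enorm (z - z'); set f := enorm (_ - _) => f_le e_le.
have a_f_le : a * f <= a * (gamma * e) by rewrite ler_wpM2l ?specnorm_ge0.
have e_le_se : (1 - a * (beta + gamma)) * e <= 0 by lra.
apply/le_anti; rewrite enorm_ge0 andbT.
by rewrite -(pmulr_rle0 _ (_ : 0 < 1 - a * (beta + gamma))) ?subr_gt0.
Qed.

End FixedPointIteration.

Section ErrorRecursion.
Variable R : realType.

Lemma infnorm_v2 (a b : R) : infnorm_v (v2 a b) = Num.max `|a| `|b|.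
Proof.
by rewrite /infnorm_v !big_ord_recl big_ord0 /= !mxE /= (max_idPl (normr_ge0 b)).
Qed.

Lemma infnorm_m22 (a b c d : R) :
  infnorm_m (mx22 a b c d) = Num.max (`|a| + `|b|) (`|c| + `|d|).
Proof.
rewrite /infnorm_m !big_ord_recl !big_ord0 /= !mxE /=.
by rewrite !addr0 (max_idPl (addr_ge0 (normr_ge0 c) (normr_ge0 d))).
Qed.

Lemma infnorm_iteration_mx (al be ga tau : R) :
  0 <= al * be -> 0 <= al * ga -> 0 <= tau ->
  infnorm_m (mx22 (al * be) (al * ga) (tau * al * be) (tau * al * ga + `|1 - tau|))
  = Num.max (al * (be + ga)) (tau * (al * (be + ga)) + `|1 - tau|).
Proof.
move=> ab_ge0 ag_ge0 tau_ge0.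
have tab_ge0 : 0 <= tau * al * be by rewrite -mulrA mulr_ge0.
have tag_ge0 : 0 <= tau * al * ga + `|1 - tau| by rewrite addr_ge0 // -mulrA mulr_ge0.
rewrite infnorm_m22 (ger0_norm ab_ge0) (ger0_norm ag_ge0) (ger0_norm tab_ge0).
by rewrite (ger0_norm tag_ge0); congr (Num.max _ _); ring.
Qed.

(* With [m = max (de e, f)], both [de e'] and [f'] are bounded using [ga e <= de e <= m]
   and [f <= m]. *)
Lemma max_weighted_contraction (al be ga de tau e f e' f' : R) :
  0 <= al -> 0 <= al * be -> 0 <= ga <= de -> 0 <= tau -> 0 <= e -> 0 <= f ->
  e' <= al * (be * e + f) -> f' <= `|1 - tau| * f + tau * (ga * e') ->
  Num.max (de * e') f'
  <= Num.max (al * (be + de)) (tau * (al * (be + ga)) + `|1 - tau|)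
     * Num.max (de * e) f.
Proof.
move=> al_ge0 ab_ge0 /andP[ga_ge0 ga_le] tau_ge0 e_ge0 f_ge0 e'_le f'_le.
set m := Num.max (de * e) f.
have de_e_le : de * e <= m by rewrite le_max lexx.
have f_le : f <= m by rewrite le_max lexx orbT.
have ga_e_le : ga * e <= m by rewrite (le_trans _ de_e_le) // ler_wpM2r.
have de_ge0 : 0 <= de := le_trans ga_ge0 ga_le.
have ad_ge0 : 0 <= al * de by exact: mulr_ge0.
have tag_ge0 : 0 <= tau * (al * ga) by rewrite !mulr_ge0.
have tab_ge0 : 0 <= tau * (al * be) by exact: mulr_ge0.
have m_ge0 : 0 <= m := le_trans f_ge0 f_le.
rewrite ge_max; apply/andP; split.
  apply: (@le_trans _ _ (al * (be + de) * m)); last by rewrite ler_wpM2r // le_max lexx.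
  have : de * e' <= de * (al * (be * e + f)) by exact: ler_wpM2l.
  have := ler_wpM2l ab_ge0 de_e_le; have := ler_wpM2l ad_ge0 f_le; lra.
apply: (@le_trans _ _ ((tau * (al * (be + ga)) + `|1 - tau|) * m)).
  have : tau * (ga * e') <= tau * (ga * (al * (be * e + f))).
    by rewrite ler_wpM2l // ler_wpM2l.
  have := ler_wpM2l tab_ge0 ga_e_le; have := ler_wpM2l tag_ge0 f_le.
  have := ler_wpM2l (normr_ge0 (1 - tau)) f_le; lra.
by rewrite ler_wpM2r // le_max lexx orbT.
Qed.

Lemma max_contraction_lt1 (s tau : R) : 0 <= s -> 0 < tau ->
  Num.max s (tau * s + `|1 - tau|) < 1 <-> s < 1 /\ 0 < tau /\ tau < 2 / (s + 1).
Proof.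
move=> s_ge0 tau_gt0; have s1_gt0 : 0 < s + 1 by rewrite ltr_wpDl.
have [tau_le1|] := boolP (tau <= 1).
  rewrite ger0_norm ?subr_ge0 // gt_max (ltr_pdivlMr _ _ s1_gt0).
  by split=> [/andP[]|[s_lt1 _]]; [nra | apply/andP; split; nra].
rewrite -ltNge => tau_gt1.
rewrite ler0_norm ?subr_le0 ?ltW // gt_max (ltr_pdivlMr _ _ s1_gt0).
by split=> [/andP[]|[s_lt1 [_ tau_lt]]]; [nra | apply/andP; split; nra].
Qed.

Lemma le_geometric (q : R) (W : nat -> R) : 0 <= q ->
  (forall k, W k.+1 <= q * W k) -> forall k, W k <= W 0%N * q ^+ k.
Proof.
move=> q_ge0 W_le; elim=> [|k ih]; first by rewrite expr0 mulr1.
by rewrite (le_trans (W_le k)) // exprS mulrCA ler_wpM2l.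
Qed.

Lemma cvg0_le_geometric (u : nat -> R) (c q : R) : `|q| < 1 ->
  (forall k, 0 <= u k <= c * q ^+ k) -> u @ \oo --> 0.
Proof.
move=> q_lt1 u_le; apply: (squeeze_cvgr _ (cvg_cst 0) (cvg_geometric c q_lt1)).
by near=> k; exact: u_le.
Unshelve. all: by end_near.
Qed.

Lemma error_cvg0 (al be ga tau : R) (e f : nat -> R) :
  0 <= al -> 0 <= al * be -> 0 <= ga -> 0 < tau ->
  al * (be + ga) < 1 -> tau < 2 / (al * (be + ga) + 1) ->
  (forall k, 0 <= e k) -> (forall k, 0 <= f k) ->
  (forall k, e k.+1 <= al * (be * e k + f k)) ->
  (forall k, f k.+1 <= `|1 - tau| * f k + tau * (ga * e k.+1)) ->
  e @ \oo --> 0.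
Proof.
move=> al_ge0 ab_ge0 ga_ge0 tau_gt0 s_lt1 tau_lt e_ge0 f_ge0 e_le f_le.
set s := al * (be + ga) in s_lt1 tau_lt.
have s_ge0 : 0 <= s by rewrite /s mulrDr addr_ge0 // mulr_ge0.
have al1_gt0 : 0 < al + 1 by rewrite ltr_wpDl.
pose de := ga + (1 - s) / (al + 1).
have c_gt0 : 0 < (1 - s) / (al + 1) by rewrite divr_gt0 ?subr_gt0.
have de_gt0 : 0 < de by rewrite ltr_wpDl.
have ga_le_de : 0 <= ga <= de by rewrite ga_ge0 lerDl ltW.
have ad_lt1 : al * (be + de) < 1.
  have : al * ((1 - s) / (al + 1)) < 1 - s.
    by rewrite mulrA ltr_pdivrMr //; lra.
  by rewrite /de addrA mulrDr -/s => ?; lra.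
pose q := Num.max (al * (be + de)) (tau * s + `|1 - tau|).
have q_ge0 : 0 <= q by rewrite le_max addr_ge0 ?orbT // mulr_ge0 // ltW.
have q_lt1 : q < 1.
  have := (max_contraction_lt1 s_ge0 tau_gt0).2 (conj s_lt1 (conj tau_gt0 tau_lt)).
  by rewrite /q !gt_max ad_lt1 => /andP[].
pose W k := Num.max (de * e k) (f k).
have W_le k : W k.+1 <= q * W k.
  exact: max_weighted_contraction (ltW tau_gt0) (e_ge0 k) (f_ge0 k) (e_le k) (f_le k).
apply: (@cvg0_le_geometric _ (W 0%N / de) q) => [|k]; first by rewrite ger0_norm.
rewrite e_ge0 mulrAC ler_pdivlMr //= mulrC.
by rewrite (le_trans _ (le_geometric q_ge0 W_le k)) // le_max lexx.
Qed.

End ErrorRecursion.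

Theorem theorem3p2 (R : realType) (n : nat) (A B Omega M N : 'M[R]_n)
    (phi psi : 'cV[R]_n -> 'cV[R]_n) (L1 L2 tau : R)
    (x y : nat -> 'cV[R]_n) (xstar : 'cV[R]_n) :
  pos_diag Omega ->
  componentwise phi -> componentwise psi ->
  (forall u v, enorm (phi u - phi v) <= L1 * enorm (u - v)) ->
  (forall u v, enorm (psi u - psi v) <= L2 * enorm (u - v)) ->
  A + Omega *m B = M - N ->
  M \in unitmx ->
  0 < tau ->
  fpi_seq A B Omega M N phi psi tau x y ->
  vncp_sol A B phi psi xstar ->
  let alpha := specnorm (invmx M) in
  let beta := specnorm N + L1 + L2 * specnorm Omega in
  let gamma := specnorm (A - Omega *m B) + L1 + L2 * specnorm Omega in
  let ystar := absv ((A - Omega *m B) *m xstar + phi xstar - Omega *m psi xstar) in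
  let E := fun k => v2 (gamma * enorm (x k - xstar)) (enorm (y k - ystar)) in
  let T := mx22 (alpha * beta) (alpha * gamma)
                (tau * alpha * beta) (tau * alpha * gamma + `|1 - tau|) in
  (forall k, infnorm_v (E k.+1) <= infnorm_m T * infnorm_v (E k)) /\
  (infnorm_m T < 1 <->
     alpha * (beta + gamma) < 1 /\ 0 < tau /\ tau < 2 / (alpha * (beta + gamma) + 1)) /\
  (alpha * (beta + gamma) < 1 /\ 0 < tau /\ tau < 2 / (alpha * (beta + gamma) + 1) ->
     x @ \oo --> xstar /\
     (forall z, vncp_sol A B phi psi z -> z = xstar)).
Proof.
move=> Omega_pd _ _ phi_lip psi_lip splitting M_unit tau_gt0 fpi sol.
move=> alpha beta gamma ystar E T.
have xstar_fixed := vncp_sol_fixed Omega_pd splitting M_unit sol.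
pose e k := enorm (x k - xstar); pose f k := enorm (y k - ystar).
have e_le k : e k.+1 <= alpha * (beta * e k + f k).
  by rewrite /e (fpi k).1 -{1}xstar_fixed; exact: enorm_fpi_stepB.
have f_le k : f k.+1 <= `|1 - tau| * f k + tau * (gamma * e k.+1).
  by rewrite /f (fpi k).2; exact: enorm_relaxB (ltW tau_gt0).
have ab_ge0 : 0 <= alpha * beta := specnorm_mul_lipschitz_gain_ge0 _ _ _ phi_lip psi_lip.
have ag_ge0 : 0 <= alpha * gamma := specnorm_mul_lipschitz_gain_ge0 _ _ _ phi_lip psi_lip.
have gamma_ge0 n_gt0 : 0 <= gamma := lipschitz_gain_ge0 _ _ n_gt0 phi_lip psi_lip.
have normT := infnorm_iteration_mx ab_ge0 ag_ge0 (ltW tau_gt0).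
split=> [k|]; last split=> [|[s_lt1 [_ tau_lt]]].
- rewrite /E !infnorm_v2 normT.
  have [n0|n_gt0] := posnP n; first by rewrite !enorm_dim0 // mulr0 normr0 maxxx mulr0.
  rewrite !(ger0_norm (mulr_ge0 (gamma_ge0 n_gt0) (enorm_ge0 _))).
  rewrite !(ger0_norm (enorm_ge0 _)).
  apply: (max_weighted_contraction (specnorm_ge0 _) ab_ge0 _ (ltW tau_gt0)
    (enorm_ge0 _) (enorm_ge0 _) (e_le k) (f_le k)).
  by rewrite (gamma_ge0 n_gt0) lexx.
- by rewrite normT; apply: max_contraction_lt1 => //; rewrite mulrDr addr_ge0.
- split=> [|z z_sol]; last first.
    have z_fixed := vncp_sol_fixed Omega_pd splitting M_unit z_sol.
    exact: (fpi_fixed_unique phi_lip psi_lip s_lt1 z_fixed xstar_fixed).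
  apply: cvg_of_enorm_cvg0; rewrite -/e; have [n0|n_gt0] := posnP n.
    by rewrite (_ : e = fun=> 0); [exact: cvg_cst | apply/funext=> k; exact: enorm_dim0].
  exact: (error_cvg0 (specnorm_ge0 _) ab_ge0 (gamma_ge0 n_gt0) tau_gt0 s_lt1 tau_lt
    (fun k => enorm_ge0 _) (fun k => enorm_ge0 _) e_le f_le).
Qed.
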